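(* Let $t_1,\dots,t_d$ be positive integers with $t_i\le n_i$ for all $i$ and $t_1=t_2\cdots t_d$, let $H$ be the stabilizer of $T=\sum_{\beta_2,\dots,\beta_d} e_1^{\iota(\beta_2,\dots,\beta_d)}\otimes e_2^{\beta_2}\otimes\cdots\otimes e_d^{\beta_d}$, so $\Lambda_{t_1\dots t_d}=G/H$. Then $G/H$ is reductive if and only if $n_i=t_i$ for all $i=1,\dots,d$. Moreover, in that case the orthogonal complement $\mathfrak{m}$ of $\mathfrak{h}$ in $\mathfrak{g}$ (with respect to $\langle Z,Z'\rangle=\sum_i\mathrm{tr}(Z_iZ_i'^{\mathsf T})$) satisfies $h\mathfrak{m}h^{-1}\subset\mathfrak{m}$ for all $h\in H$.
   Context: Fix integers $d\ge 3$ and $n_1,\dots,n_d\ge 2$. $V=\mathbb{R}^{n_1}\otimes\cdots\otimes\mathbb{R}^{n_d}$, and $G=\mathrm{GL}(n_1)\times\cdots\times\mathrm{GL}(n_d)$ acts on $V$ by $(g_1,\dots,g_d)\cdot(v_1\otimes\cdots\otimes v_d)=(g_1v_1)\otimes\cdots\otimes(g_dv_d)$, extended linearly. $e_i^1,\dots,e_i^{n_i}$ is the standard basis of $\mathbb{R}^{n_i}$. $\iota:[t_2]\times\cdots\times[t_d]\to[t_1]$ is the lexicographic bijection with $\beta_2$ most significant. $\mathfrak{g}=\mathfrak{gl}(n_1)\times\cdots\times\mathfrak{gl}(n_d)$ is the Lie algebra of $G$, $\mathfrak{h}$ the Lie algebra of $H$, and $H$ acts on $\mathfrak{g}$ by $hZh^{-1}=(h_iZ_ih_i^{-1})_i$.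 A homogeneous space $G/H$ is called reductive if there exists a linear subspace $\mathfrak{p}\subset\mathfrak{g}$ with $\mathfrak{p}\oplus\mathfrak{h}=\mathfrak{g}$ and $h\mathfrak{p}h^{-1}\subset\mathfrak{p}$ for all $h\in H$. *)

From HB Require Import structures.
From mathcomp Require Import all_boot all_order all_algebra.
From mathcomp Require Import reals.
Set Implicit Arguments. Unset Strict Implicit. Unset Printing Implicit Defensive.
Import Order.TTheory GRing.Theory Num.Theory.
Local Open Scope ring_scope.

Section TensorDefs.
Variables (R : realType) (d : nat) (n : 'I_d -> nat).

Definition midx := {dffun forall i : 'I_d, 'I_(n i)}.

(* V = R^{n_1} (x) ... (x) R^{n_d}, as coordinate functions *)
Definition tensor := midx -> R.

(* elements of gl(n_1) x ... x gl(n_d) (also carrier of G) *)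
Definition gltuple := forall i : 'I_d, 'M[R]_(n i).

Definition inG (g : gltuple) : Prop := forall i, g i \in unitmx.

(* (g_1,...,g_d) . T, extended linearly from pure tensors *)
Definition act (g : gltuple) (T : tensor) : tensor :=
  fun a => \sum_(b : midx) (\prod_(i < d) g i (a i) (b i)) * T b.

(* derivative at 0 of t |-> (1 + tZ) . T : the infinitesimal action of g *)
Definition dact (Z : gltuple) (T : tensor) : tensor :=
  fun a => \sum_(b : midx)
     (\sum_(i < d) Z i (a i) (b i) *
        \prod_(j < d | j != i) ((a j == b j :> nat)%:R : R)) * T b.

Definition gl0 : gltuple := fun i => 0.
Definition gladd (Z Z' : gltuple) : gltuple := fun i => Z i + Z' i.
Definition glscale (c : R) (Z : gltuple) : gltuple := fun i => c *: Z i.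
Definition glconj (h Z : gltuple) : gltuple := fun i => h i *m Z i *m invmx (h i).
Definition gldot (Z Z' : gltuple) : R := \sum_(i < d) \tr (Z i *m (Z' i)^T).

Definition subspace (P : gltuple -> Prop) : Prop :=
  [/\ P gl0, (forall Z Z', P Z -> P Z' -> P (gladd Z Z'))
    & (forall c Z, P Z -> P (glscale c Z))].

Definition direct_sum_full (P Q : gltuple -> Prop) : Prop :=
  (forall Z, P Z -> Q Z -> Z = gl0) /\
  (forall Z, exists X Y, P X /\ Q Y /\ Z = gladd X Y).

Variable t : 'I_d -> nat.

(* lexicographic bijection iota, beta_2 most significant (0-based indices:
   coordinate 0 is the first factor) *)
Definition iota_lex (a : midx) : nat :=
  (\sum_(i < d | (0 < val i)%N) val (a i) * \prod_(j < d | (val i < val j)%N) t j)%N.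

(* T = sum_beta e_1^{iota(beta)} (x) e_2^{beta_2} (x) ... (x) e_d^{beta_d} *)
Definition Tt : tensor := fun a =>
  (([forall i : 'I_d, (0 < val i)%N ==> (val (a i) < t i)%N] &&
    [forall i : 'I_d, (val i == 0%N) ==> (val (a i) == iota_lex a)]) %:R).

Definition inH (h : gltuple) : Prop := inG h /\ forall a, act h Tt a = Tt a.

(* Lie algebra of H = annihilator of T under the infinitesimal action *)
Definition in_h (Z : gltuple) : Prop := forall a, dact Z Tt a = 0.

Definition in_m (Z : gltuple) : Prop := forall K, in_h K -> gldot Z K = 0.

Definition reductive : Prop :=
  exists P : gltuple -> Prop,
    [/\ subspace P, direct_sum_full P in_h
      & forall h, inH h -> forall Z, P Z -> P (glconj h Z)].

End TensorDefs.

(* Write E_pq for a matrix unit; factors and coordinates are indexed from 0.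

If t_k < n_k, then T vanishes at every multi-index whose k-th coordinate is
t_k.  Hence the transvections 1 + c E_{0,t_k} acting on the k-th factor lie in
H, and E_{0,t_k} in the k-th factor lies in h.  Every element of h has a zero
(t_k,0) entry in its k-th factor, so an H-invariant complement p of h would
contain some X with X_k(t_k,0) = 1, namely the p-component of E_{t_k,0}.
Conjugating X by 1 + E and by 1 - E and subtracting 2X leaves
-2 E X E = -2 E_{0,t_k}, a nonzero element of h lying in p.

If n = t, the support of T is the graph of iota: the first coordinate z of a
multi-index in the support determines the others, which are the mixed-radix
digits of z.  Then dact Z T is Z_0 read along this graph plus a term depending
only on Z_1, ..., Z_(d-1), so gl(n_0) x 0 x ... x 0 is a complement of h, and
it is obviously stable under conjugation.  Moreover H is then closed under
transposition.  Since H fixes T, conjugation by H preserves h, and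
<h Z h^-1, K> = <Z, h^T K h^-T> carries this over to the orthogonal
complement. *)

From HB Require Import structures.
From mathcomp Require Import all_boot all_order all_algebra.
From mathcomp Require Import reals.
From mathcomp Require Import ring zify.
From Stdlib Require Import FunctionalExtensionality.
Set Implicit Arguments. Unset Strict Implicit. Unset Printing Implicit Defensive.
Import Order.TTheory GRing.Theory Num.Theory.
Local Open Scope ring_scope.

Section MultiIndex.
Variables (d : nat) (n : 'I_d -> nat).

Definition midx_with (a : midx n) i (c : 'I_(n i)) : midx n :=
  [ffun j : 'I_d => dfwith (a : forall j, 'I_(n j)) c j].

Lemma midx_with_in (a : midx n) i (c : 'I_(n i)) : midx_with a c i = c.
Proof. by rewrite ffunE dfwith_in. Qed.

Lemma midx_with_out (a : midx n) i (c : 'I_(n i)) j : j != i -> midx_with a c j = a j.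
Proof. by move=> ji; rewrite ffunE dfwith_out // eq_sym. Qed.

Lemma midx_with_id (a : midx n) i : midx_with a (a i) = a.
Proof. by apply/ffunP => j; rewrite ffunE; case: dfwithP. Qed.

Lemma midx_with_with (a : midx n) i (c c' : 'I_(n i)) :
  midx_with (midx_with a c) c' = midx_with a c'.
Proof.
apply/ffunP => j; case: (eqVneq j i) => [->|ji]; first by rewrite !midx_with_in.
by rewrite !midx_with_out.
Qed.

End MultiIndex.

Section SlotAction.
Variables (R : realType) (d : nat) (n : 'I_d -> nat).
Implicit Types (a b c : midx n) (S : tensor R n) (g K Z : gltuple R n).

Definition act_slot i (A : 'M[R]_(n i)) S : tensor R n :=
  fun a => \sum_(x : 'I_(n i)) A (a i) x * S (midx_with a x).

Lemma act_slot0 i S a : act_slot (0 : 'M_(n i)) S a = 0.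
Proof. by rewrite /act_slot big1 // => x _; rewrite mxE mul0r. Qed.

Lemma act_slot1 i S a : act_slot (1%:M : 'M_(n i)) S a = S a.
Proof.
rewrite /act_slot (bigD1 (a i)) //= big1 ?addr0 => [|x xa].
  by rewrite mxE eqxx mul1r midx_with_id.
by rewrite mxE eq_sym (negbTE xa) mul0r.
Qed.

Lemma act_slotD i (A B : 'M[R]_(n i)) S a :
  act_slot (A + B) S a = act_slot A S a + act_slot B S a.
Proof. by rewrite /act_slot -big_split; apply: eq_bigr => x _; rewrite mxE mulrDl. Qed.

Lemma act_slotZ i (r : R) (A : 'M[R]_(n i)) S a :
  act_slot (r *: A) S a = r * act_slot A S a.
Proof. by rewrite /act_slot mulr_sumr; apply: eq_bigr => x _; rewrite mxE mulrA. Qed.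

Lemma act_slot_delta i (p q : 'I_(n i)) S a :
  act_slot (delta_mx p q) S a = (a i == p)%:R * S (midx_with a q).
Proof.
rewrite /act_slot (bigD1 q) //= big1 ?addr0 => [|x xq]; first by rewrite mxE eqxx andbT.
by rewrite mxE (negbTE xq) andbF mul0r.
Qed.

Lemma sum_eq_off_slot a i (F : midx n -> R) :
  \sum_(b : midx n) (\prod_(j < d | j != i) (a j == b j)%:R) * F b =
  \sum_(x : 'I_(n i)) F (midx_with a x).
Proof.
have agree b : \prod_(j < d | j != i) ((a j == b j)%:R : R) = (midx_with a (b i) == b)%:R.
  case: eqP => [<-|neq]; first by rewrite big1 // => j ji; rewrite midx_with_out // eqxx.
  have /exists_inP[j ji abj] : [exists (j | j != i), a j != b j].
    apply: contraT => /exists_inPn agr; case: neq.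
    apply/ffunP => j; case: (eqVneq j i) => [->|ji]; first by rewrite midx_with_in.
    by rewrite midx_with_out //; apply/eqP/negbNE/agr.
  by rewrite (bigD1 j) //= (negbTE abj) mul0r.
under eq_bigr do rewrite agree mulr_natl mulrb.
rewrite -big_mkcond (reindex_onto (@midx_with _ _ a i) (fun b : midx n => b i)) /=.
  by apply: eq_bigl => x; rewrite midx_with_in !eqxx.
by move=> b /eqP.
Qed.

Lemma sum_midx_with i (F : 'I_(n i) -> midx n -> R) :
  \sum_(b : midx n) \sum_(y : 'I_(n i)) F (b i) (midx_with b y) =
  \sum_(x : 'I_(n i)) \sum_(c : midx n) F x c.
Proof.
rewrite !pair_big /=.
pose h (xc : 'I_(n i) * midx n) := (midx_with xc.2 xc.1, xc.2 i).
pose h' (bx : midx n * 'I_(n i)) := (bx.1 i, midx_with bx.1 bx.2).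
rewrite (reindex h); last first.
  apply: onW_bij; exists h' => [[x c]|[b y]]; rewrite /h /h' /=.
    by rewrite midx_with_in midx_with_with midx_with_id.
  by rewrite midx_with_with midx_with_id midx_with_in.
by apply: eq_bigr => -[x c] _; rewrite /h /= midx_with_in midx_with_with midx_with_id.
Qed.

Lemma dactE Z S a : dact Z S a = \sum_(i < d) act_slot (Z i) S a.
Proof.
rewrite /dact; under eq_bigr do rewrite mulr_suml.
rewrite exchange_big; apply: eq_bigr => i _.
(* [dact] tests [a j == b j :> nat], which is convertible to the test in ['I_(n j)]. *)
rewrite (eq_bigr (fun b => (\prod_(j < d | j != i) (a j == b j)%:R) *
                          (Z i (a i) (b i) * S b))); last first.
  by move=> b _; rewrite mulrCA mulrA.
by rewrite sum_eq_off_slot; apply: eq_bigr => x _; rewrite midx_with_in.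
Qed.

Lemma prod_dfwith g i (A : 'M[R]_(n i)) a b :
  \prod_(l < d) dfwith g A l (a l) (b l) =
  A (a i) (b i) * \prod_(l < d | l != i) g l (a l) (b l).
Proof.
rewrite (bigD1 i) //= dfwith_in; congr (_ * _).
by apply: eq_bigr => l li; rewrite dfwith_out // eq_sym.
Qed.

Lemma prod_midx_with g i (x : 'I_(n i)) a b :
  \prod_(l < d) g l (midx_with a x l) (b l) =
  g i x (b i) * \prod_(l < d | l != i) g l (a l) (b l).
Proof.
rewrite (bigD1 i) //= midx_with_in; congr (_ * _).
by apply: eq_bigr => l li; rewrite midx_with_out.
Qed.

Lemma act_dfwith1 i (A : 'M[R]_(n i)) S a :
  act (dfwith (fun l => 1%:M) A) S a = act_slot A S a.
Proof.
rewrite /act (eq_bigr (fun b => (\prod_(l < d | l != i) (a l == b l)%:R) *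
                               (A (a i) (b i) * S b))); last first.
  move=> b _; rewrite prod_dfwith mulrCA mulrA; congr (_ * _ * _).
  by apply: eq_bigr => l _; rewrite mxE.
by rewrite sum_eq_off_slot; apply: eq_bigr => x _; rewrite midx_with_in.
Qed.

Lemma act_slot_act g i (B : 'M[R]_(n i)) S a :
  act_slot B (act g S) a = act (dfwith g (B *m g i)) S a.
Proof.
rewrite /act_slot /act; under eq_bigr do rewrite mulr_sumr.
rewrite exchange_big; apply: eq_bigr => c _.
rewrite prod_dfwith mxE !mulr_suml; apply: eq_bigr => x _.
by rewrite prod_midx_with; ring.
Qed.

Lemma act_act_slot g i (A : 'M[R]_(n i)) S a :
  act g (act_slot A S) a = act (dfwith g (g i *m A)) S a.
Proof.
pose G x c := g i (a i) x * A x (c i) * (\prod_(l < d | l != i) g l (a l) (c l)) * S c.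
transitivity (\sum_(b : midx n) \sum_(y : 'I_(n i)) G (b i) (midx_with b y)).
  rewrite /act; apply: eq_bigr => b _; rewrite mulr_sumr; apply: eq_bigr => y _.
  rewrite /G midx_with_in (bigD1 i) //=.
  rewrite (eq_bigr (fun l => g l (a l) (midx_with b y l))); first by ring.
  by move=> l li; rewrite midx_with_out.
rewrite sum_midx_with exchange_big; apply: eq_bigr => c _.
by rewrite prod_dfwith mxE !mulr_suml; apply: eq_bigr => x _; rewrite /G; ring.
Qed.

Lemma dact_conj g K S a : inG g ->
  dact (glconj g K) (act g S) a = act g (dact K S) a.
Proof.
move=> g_unit; rewrite dactE.
under eq_bigr do rewrite act_slot_act /glconj mulmxKV ?g_unit //.
transitivity (\sum_(i < d) act g (act_slot (K i) S) a).
  by apply: eq_bigr => i _; rewrite act_act_slot.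
rewrite /act -exchange_big; apply: eq_bigr => b _.
by rewrite dactE mulr_sumr.
Qed.

Lemma in_h_conj (t : 'I_d -> nat) g K : inH t g -> in_h t K -> in_h t (glconj g K).
Proof.
move=> [g_unit gT] K_h a.
have -> : Tt R t = act g (Tt R t) by apply: functional_extensionality => b; rewrite gT.
by rewrite dact_conj // /act big1 // => b _; rewrite K_h mulr0.
Qed.

Lemma gldot_conj h Z K : gldot (glconj h Z) K = gldot Z (glconj (fun i => (h i)^T) K).
Proof.
apply: eq_bigr => i _; rewrite /glconj !trmx_mul trmxK trmx_inv trmxK.
by rewrite mxtrace_mulC !mulmxA mxtrace_mulC !mulmxA mxtrace_mulC !mulmxA.
Qed.

End SlotAction.

Section MixedRadix.
Variables (d : nat) (t : 'I_d -> nat).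
Local Open Scope nat_scope.
Implicit Types (x y : 'I_d -> nat) (m : nat).

Definition radix_weight m : nat := \prod_(j < d | m <= j) t j.

Definition radix_val x m : nat := \sum_(i < d | m <= i) x i * radix_weight i.+1.

Definition radix_digits x m := forall i : 'I_d, m <= i -> x i < t i.

Lemma radix_weightS m (md : m < d) : radix_weight m = t (Ordinal md) * radix_weight m.+1.
Proof.
rewrite /radix_weight (bigD1 (Ordinal md)) //=; congr (_ * _).
by apply: eq_bigl => j; rewrite -(inj_eq val_inj) /=; case: ltngtP.
Qed.

Lemma radix_valS x m (md : m < d) :
  radix_val x m = x (Ordinal md) * radix_weight m.+1 + radix_val x m.+1.
Proof.
rewrite /radix_val (bigD1 (Ordinal md)) //=; congr (_ + _).
by apply: eq_bigl => j; rewrite -(inj_eq val_inj) /=; case: ltngtP.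
Qed.

Lemma radix_weight_end m : d <= m -> radix_weight m = 1.
Proof.
by move=> dm; rewrite /radix_weight big_pred0 // => i; rewrite leqNgt (leq_trans _ dm).
Qed.

Lemma radix_val_end x m : d <= m -> radix_val x m = 0.
Proof.
by move=> dm; rewrite /radix_val big_pred0 // => i; rewrite leqNgt (leq_trans _ dm).
Qed.

Lemma radix_val_lt x m : radix_digits x m -> radix_val x m < radix_weight m.
Proof.
have [k] := ubnP (d - m); elim: k m => // k IH m dmk xm.
have [md|dm] := ltnP m d; last by rewrite radix_val_end ?radix_weight_end.
rewrite (radix_valS x md) (radix_weightS md).
have lt_rest : radix_val x m.+1 < radix_weight m.+1.
  by apply: IH => [|i mi]; [lia | apply: xm; lia].
apply: (leq_trans (_ : _ < x (Ordinal md) * radix_weight m.+1 + radix_weight m.+1)).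
  by rewrite ltn_add2l.
by rewrite addnC -mulSn leq_mul2r xm ?orbT.
Qed.

Lemma radix_val_inj x y m : radix_digits x m -> radix_digits y m ->
  radix_val x m = radix_val y m -> forall i : 'I_d, m <= i -> x i = y i.
Proof.
have [k] := ubnP (d - m); elim: k m => // k IH m dmk xm ym.
have [md|dm] := ltnP m d; last by move=> _ i mi; have := ltn_ord i; lia.
have digits_S z : radix_digits z m -> radix_digits z m.+1.
  by move=> zm i mi; apply: zm; lia.
have lt_x := radix_val_lt (digits_S x xm); have lt_y := radix_val_lt (digits_S y ym).
have w_pos : 0 < radix_weight m.+1 by apply: leq_ltn_trans lt_x.
rewrite (radix_valS x md) (radix_valS y md) => e.
have e_hi := congr1 (divn^~ (radix_weight m.+1)) e.
rewrite /= !divnMDl // !divn_small // !addn0 in e_hi.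
have e_lo := congr1 (modn^~ (radix_weight m.+1)) e.
rewrite /= !modnMDl !modn_small // in e_lo.
move=> i; rewrite leq_eqVlt => /orP[/eqP mi|mi].
  by have -> : i = Ordinal md by apply/val_inj.
by apply: IH e_lo i mi; [lia | apply: digits_S | apply: digits_S].
Qed.

Lemma radix_val_surj m r : r < radix_weight m ->
  exists2 x, radix_digits x m & radix_val x m = r.
Proof.
have [k] := ubnP (d - m); elim: k m r => // k IH m r dmk.
have [md|dm] := ltnP m d; last first.
  rewrite radix_weight_end // ltnS leqn0 => /eqP->.
  by exists (fun=> 0) => [i mi|]; [have := ltn_ord i; lia | rewrite radix_val_end].
rewrite radix_weightS => r_lt; set w := radix_weight m.+1 in r_lt.
have w_pos : 0 < w by rewrite lt0n; apply: contraTneq r_lt => ->; rewrite muln0.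
have [y ym1 ry] := IH m.+1 (r %% w) ltac:(lia) (ltn_pmod r w_pos).
pose x i := if val i == m then r %/ w else y i.
exists x => [i mi|].
  rewrite /x; case: eqP => [im|im]; last first.
    by apply: ym1; rewrite ltn_neqAle mi andbT eq_sym; apply/eqP.
  by rewrite ltn_divLR // (_ : i = Ordinal md) //; apply/val_inj.
have same_rest : radix_val x m.+1 = radix_val y m.+1.
  by apply: eq_bigr => i mi; rewrite /x ifN // neq_ltn mi orbT.
by rewrite (radix_valS _ md) /x /= eqxx same_rest ry -divn_eq.
Qed.

End MixedRadix.

Section Unipotent.
Variables (R : comUnitRingType) (m : nat).
Implicit Types (E X : 'M[R]_m).

Lemma mulmx_unipotent E : E *m E = 0 -> (1%:M + E) *m (1%:M - E) = 1%:M.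
Proof.
by move=> EE; rewrite mulmxDl mul1mx mulmxBr mulmx1 EE subr0 subrK.
Qed.

Lemma unitmx_unipotent E : E *m E = 0 -> 1%:M + E \in unitmx.
Proof. by move=> EE; case: (mulmx1_unit (mulmx_unipotent EE)). Qed.

Lemma invmx_unipotent E : E *m E = 0 -> invmx (1%:M + E) = 1%:M - E.
Proof.
move=> EE; rewrite -[RHS](mulKmx (unitmx_unipotent EE)).
by rewrite mulmx_unipotent // mulmx1.
Qed.

Lemma conjmx_unipotent_sum E X : E *m E = 0 ->
  (1%:M + E) *m X *m invmx (1%:M + E) + (1%:M - E) *m X *m invmx (1%:M - E) =
  X *+ 2 - (E *m X *m E) *+ 2.
Proof.
move=> EE; have EE' : (- E) *m (- E) = 0 by rewrite mulmxN mulNmx opprK.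
rewrite invmx_unipotent // invmx_unipotent // opprK.
rewrite !(mulmxDl, mulmxDr, mulmxBl, mulmxBr, mul1mx, mulmx1, mulmxN, mulNmx).
apply/matrixP => i j; rewrite !mxE; ring.
Qed.

Lemma delta_mx_sandwich (p q : 'I_m) X :
  delta_mx p q *m X *m delta_mx p q = X q p *: delta_mx p q.
Proof.
apply/matrixP => i j; rewrite !mxE (bigD1 p) //= big1 ?addr0; last first.
  by move=> c /negbTE cp; rewrite !mxE cp /= mulr0.
rewrite !mxE (bigD1 q) //= big1 ?addr0; last first.
  by move=> c /negbTE cq; rewrite !mxE cq andbF mul0r.
rewrite !mxE !eqxx !andbT.
by case: (i == p); case: (j == q); rewrite /= ?mul0r ?mulr0 ?mul1r ?mulr1.
Qed.

End Unipotent.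

Section Stabilizer.
Variables (R : realType) (d : nat) (n t : 'I_d -> nat) (i0 : 'I_d).
Hypothesis i0_0 : val i0 = 0%N.
Hypothesis t_gt0 : forall i, (0 < t i)%N.
Hypothesis t_le_n : forall i, (t i <= n i)%N.
Hypothesis t_i0 : t i0 = (\prod_(j < d | (0 < val j)%N) t j)%N.
Local Notation T := (Tt R t).

Lemma iota_lexE (a : midx n) : iota_lex t a = radix_val t (fun i => a i) 1.
Proof. by []. Qed.

Lemma t_i0E : t i0 = radix_weight t 1.
Proof. by rewrite t_i0. Qed.

Lemma eq_i0 (i : 'I_d) : val i = 0%N -> i = i0.
Proof. by move=> i_0; apply/val_inj; rewrite i_0 i0_0. Qed.

Lemma lt0_neq_i0 (i : 'I_d) : (0 < i)%N = (i != i0).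
Proof. by rewrite lt0n -(inj_eq val_inj) i0_0. Qed.

Lemma iota_lex_lt (a : midx n) : (forall i : 'I_d, 0 < i -> a i < t i)%N ->
  (iota_lex t a < t i0)%N.
Proof. by move=> a_lt; rewrite iota_lexE t_i0E; apply: radix_val_lt. Qed.

Lemma Tt_out (a : midx n) k : (t k <= a k)%N -> T a = 0.
Proof.
move=> a_out; rewrite /Tt.
case: (boolP [forall i : 'I_d, (0 < i)%N ==> (a i < t i)%N]) => //= /forall_inP a_in.
have [k_0|k_gt0] := posnP k; last by move: (a_in k k_gt0); rewrite ltnNge a_out.
move: a_out; rewrite (eq_i0 k_0) => a_out.
case: forallP => //= /(_ i0); rewrite i0_0 eqxx => /eqP a_i0.
by move: (iota_lex_lt a_in); rewrite -a_i0 ltnNge a_out.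
Qed.

Lemma Tt_in (a : midx n) : (forall i : 'I_d, 0 < i -> a i < t i)%N ->
  T a = (a i0 == iota_lex t a :> nat)%:R.
Proof.
move=> a_in; rewrite /Tt (introT forall_inP a_in) /=.
congr (nat_of_bool _)%:R; apply/forallP/eqP => [a_iota|a_iota i].
  by have := a_iota i0; rewrite i0_0 eqxx => /eqP.
by apply/implyP => /eqP/eq_i0->; apply/eqP.
Qed.

Definition midx0 : midx n := [ffun j : 'I_d => Ordinal (leq_trans (t_gt0 j) (t_le_n j))].

Lemma midx0E j : val (midx0 j) = 0%N.
Proof. by rewrite ffunE. Qed.

Lemma midx0_withE k (c : 'I_(n k)) i :
  val (midx_with midx0 c i) = if i == k then val c else 0%N.
Proof. by case: eqVneq => [->|ik]; rewrite ?midx_with_in // midx_with_out // midx0E. Qed.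

Lemma iota_lex_midx0_with k (c : 'I_(n k)) :
  iota_lex t (midx_with midx0 c) =
  if (0 < k)%N then (c * radix_weight t k.+1)%N else 0%N.
Proof.
have digit := midx0_withE c; rewrite /iota_lex; case: posnP => [k_0|k_gt0].
  rewrite big1 // => i i_gt0; rewrite digit.
  case: eqVneq => [ik|_]; last by rewrite mul0n.
  by move: i_gt0; rewrite ik /= k_0.
rewrite (bigD1 k k_gt0) /= digit eqxx [X in (_ + X)%N]big1 ?addn0 // => i /andP[_ ik].
by rewrite digit (negbTE ik) mul0n.
Qed.

Lemma Tt_midx0_with k (c : 'I_(n k)) : T (midx_with midx0 c) = (val c == 0%N)%:R.
Proof.
have [c_lt|c_ge] := ltnP c (t k); last first.
  rewrite (@Tt_out _ k) ?midx_with_in //.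
  by case: eqP => // c_0; move: c_ge (t_gt0 k); rewrite c_0; lia.
rewrite Tt_in => [|i _]; last by rewrite midx0_withE; case: eqP => [->|].
rewrite iota_lex_midx0_with midx0_withE; case: posnP => [k_0|k_gt0].
  by rewrite -(eq_i0 k_0) eqxx.
rewrite ifN; last by apply: contraTneq k_gt0 => <-; rewrite i0_0.
by rewrite eq_sym muln_eq0 -[radix_weight _ _ == 0%N]negbK -lt0n prodn_gt0 ?orbF.
Qed.

Section ProperFactor.
Variable k : 'I_d.
Hypothesis t_lt_n : (t k < n k)%N.

Let p : 'I_(n k) := midx0 k.
Let q : 'I_(n k) := Ordinal t_lt_n.

Lemma Tt_with_q (a : midx n) : T (midx_with a q) = 0.
Proof. by rewrite (@Tt_out _ k) // midx_with_in. Qed.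

Lemma delta_mx_pq_sqr : delta_mx p q *m delta_mx p q = 0 :> 'M[R]_(n k).
Proof.
rewrite mul_delta_mx_0 //; apply: contraTneq (t_gt0 k) => qp.
by rewrite -[t k]/(val q) qp midx0E.
Qed.

Definition transvection (c : R) : gltuple R n :=
  dfwith (fun l => 1%:M : 'M[R]_(n l)) (1%:M + c *: delta_mx p q : 'M[R]_(n k)).

Lemma transvection_inH c : inH t (transvection c).
Proof.
split => [l|a].
  rewrite /transvection; case: dfwithP => [|l' _]; last exact: unitmx1.
  by apply: unitmx_unipotent; rewrite -scalemxAl -scalemxAr delta_mx_pq_sqr !scaler0.
rewrite act_dfwith1 act_slotD act_slot1 act_slotZ act_slot_delta Tt_with_q.
by rewrite !mulr0 addr0.
Qed.

Lemma delta_in_h : in_h t (dfwith (gl0 R n) (delta_mx p q)).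
Proof.
move=> a; rewrite dactE (bigD1 k) //= dfwith_in act_slot_delta Tt_with_q mulr0 add0r.
by rewrite big1 // => l lk; rewrite dfwith_out 1?eq_sym // act_slot0.
Qed.

Lemma in_h_entry (K : gltuple R n) : in_h t K -> K k q p = 0.
Proof.
move=> K_h; have := K_h (midx_with midx0 q).
rewrite dactE (bigD1 k) //= [X in _ + X]big1 ?addr0 => [|l lk]; last first.
  rewrite /act_slot big1 // => x _; rewrite (@Tt_out _ k) ?mulr0 //.
  by rewrite midx_with_out 1?eq_sym // midx_with_in.
have is_p (x : 'I_(n k)) : (val x == 0%N) = (x == p).
  by rewrite -(midx0E k) (inj_eq val_inj).
rewrite /act_slot midx_with_in.
under eq_bigr do rewrite midx_with_with Tt_midx0_with is_p mulr_natr mulrb.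
by rewrite -big_mkcond big_pred1_eq.
Qed.

Lemma invariant_subspace_delta (P : gltuple R n -> Prop) (X : gltuple R n) :
  subspace P -> (forall h, inH t h -> forall Z, P Z -> P (glconj h Z)) ->
  P X -> X k q p = 1 -> P (dfwith (gl0 R n) (delta_mx p q)).
Proof.
move=> [_ P_add P_scale] P_conj PX X_qp.
have P_sum := P_add _ _ (P_add _ _ (P_conj _ (transvection_inH 1) _ PX)
  (P_conj _ (transvection_inH (-1)) _ PX)) (P_scale (-2) _ PX).
have := P_scale (- 2^-1) _ P_sum; congr P.
apply: functional_extensionality_dep => l; rewrite /glscale /gladd /glconj /transvection.
have two_neq0 : (2 : R) != 0 by rewrite pnatr_eq0.
case: (eqVneq l k) => [lk|lk]; last first.
  rewrite !dfwith_out 1?eq_sym // invmx1 mul1mx mulmx1.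
  by apply/matrixP => i j; rewrite !mxE; field.
subst l; rewrite !dfwith_in scale1r scaleN1r conjmx_unipotent_sum ?delta_mx_pq_sqr //.
rewrite delta_mx_sandwich X_qp scale1r.
by apply/matrixP => i j; rewrite !mxE; field.
Qed.

Lemma not_reductive_of_lt : ~ reductive R n t.
Proof.
move=> [P [P_sub [P_h0 P_dec] P_conj]].
have [X [K [PX [K_h Y_eq]]]] := P_dec (dfwith (gl0 R n) (delta_mx q p)).
have X_qp : X k q p = 1.
  have := congr1 (fun Z : gltuple R n => Z k q p) Y_eq.
  by rewrite /= /gladd mxE (in_h_entry K_h) addr0 dfwith_in mxE !eqxx.
have := P_h0 _ (invariant_subspace_delta P_sub P_conj PX X_qp) delta_in_h.
move=> /(congr1 (fun Z : gltuple R n => Z k p q)).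
by rewrite dfwith_in /gl0 !mxE !eqxx /= => /eqP; rewrite oner_eq0.
Qed.

End ProperFactor.

Section EqualFactors.
Hypothesis n_eq_t : forall i, n i = t i.

Lemma midx_lt_t (a : midx n) i : (a i < t i)%N.
Proof. by rewrite -n_eq_t. Qed.

Lemma Tt_eq (a : midx n) : T a = (a i0 == iota_lex t a :> nat)%:R.
Proof. by rewrite Tt_in // => i _; apply: midx_lt_t. Qed.

Lemma iota_lex_lt_n (a : midx n) : (iota_lex t a < n i0)%N.
Proof. by rewrite n_eq_t iota_lex_lt // => i _; apply: midx_lt_t. Qed.

Lemma iota_lex_inj (a b : midx n) :
  iota_lex t a = iota_lex t b -> forall i, i != i0 -> a i = b i.
Proof.
move=> ab i; rewrite -lt0_neq_i0 => i_gt0; apply/val_inj.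
rewrite !iota_lexE in ab.
by apply: (radix_val_inj _ _ ab) => // j _; apply: midx_lt_t.
Qed.

Lemma iota_lex_with_i0 (a : midx n) (c : 'I_(n i0)) :
  iota_lex t (midx_with a c) = iota_lex t a.
Proof. by apply: eq_bigr => i; rewrite lt0_neq_i0 => i_i0; rewrite midx_with_out. Qed.

Definition diag_midx (z : 'I_(n i0)) : midx n :=
  odflt midx0 [pick b : midx n | (b i0 == z) && (iota_lex t b == z)].

Lemma diag_midxP z : (diag_midx z i0 == z) && (iota_lex t (diag_midx z) == z).
Proof.
rewrite /diag_midx; case: pickP => [b //|no_b].
have [x x_lt x_z] : exists2 x, radix_digits t x 1 & radix_val t x 1 = z.
  by apply: radix_val_surj; rewrite -t_i0E -n_eq_t.
pose b := midx_with [ffun i : 'I_d => insubd (midx0 i) (x i)] z.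
suff iota_b : iota_lex t b = z by have := no_b b; rewrite midx_with_in iota_b !eqxx.
have x_lt_n (i : 'I_d) : (1 <= i)%N -> (x i < n i)%N by rewrite n_eq_t; apply: x_lt.
rewrite iota_lex_with_i0 iota_lexE -x_z.
by apply: eq_bigr => i i_gt0; rewrite ffunE val_insubd x_lt_n.
Qed.

Lemma diag_midx_i0 z : diag_midx z i0 = z.
Proof. by have /andP[/eqP] := diag_midxP z. Qed.

Lemma iota_lex_diag z : iota_lex t (diag_midx z) = z.
Proof. by have /andP[_ /eqP] := diag_midxP z. Qed.

Lemma Tt_diag (a : midx n) : T a = (a == diag_midx (a i0))%:R.
Proof.
rewrite Tt_eq; congr (nat_of_bool _)%:R; apply/eqP/eqP => [a_iota|a_diag].
  apply/ffunP => i; case: (eqVneq i i0) => [->|i_i0]; first by rewrite diag_midx_i0.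
  by apply: iota_lex_inj i_i0; rewrite iota_lex_diag.
by rewrite [in RHS]a_diag iota_lex_diag.
Qed.

Lemma sum_Tt (F : midx n -> R) :
  \sum_(b : midx n) T b * F b = \sum_(z : 'I_(n i0)) F (diag_midx z).
Proof.
under eq_bigr do rewrite Tt_diag mulr_natl mulrb.
rewrite -big_mkcond (reindex_onto diag_midx (fun b : midx n => b i0)) => [|b /eqP/esym //].
by apply: eq_bigl => z; rewrite diag_midx_i0 !eqxx.
Qed.

Lemma act_Tt (g : gltuple R n) a : act g T a =
  \sum_(z : 'I_(n i0)) g i0 (a i0) z * \prod_(i < d | i != i0) g i (a i) (diag_midx z i).
Proof.
rewrite /act; under eq_bigr do rewrite mulrC.
by rewrite sum_Tt; apply: eq_bigr => z _; rewrite (bigD1 i0) //= diag_midx_i0.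
Qed.

Lemma midx_with_diag (a : midx n) :
  midx_with (diag_midx (Ordinal (iota_lex_lt_n a))) (a i0) = a.
Proof.
apply/ffunP => i; case: (eqVneq i i0) => [->|i_i0]; first by rewrite midx_with_in.
by rewrite midx_with_out //; apply: iota_lex_inj i_i0; rewrite iota_lex_diag.
Qed.

Lemma Tt_with_i0 (a : midx n) (c : 'I_(n i0)) :
  T (midx_with a c) = (val c == iota_lex t a)%:R.
Proof. by rewrite Tt_eq midx_with_in iota_lex_with_i0. Qed.

Lemma inH_trmx (h : gltuple R n) : inH t h -> inH t (fun i => (h i)^T).
Proof.
move=> [h_unit hT]; split => [i|a]; first by rewrite unitmx_tr.
pose M := \matrix_(y, z) \prod_(i < d | i != i0) h i (diag_midx y i) (diag_midx z i).
have hM : h i0 *m M^T = 1%:M.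
  apply/matrixP => x y; have := hT (midx_with (diag_midx y) x).
  rewrite act_Tt Tt_with_i0 iota_lex_diag midx_with_in !mxE => <-.
  apply: eq_bigr => z _; rewrite !mxE; congr (_ * _).
  by apply: eq_bigr => i i_i0; rewrite midx_with_out.
have hM' : (h i0)^T *m M = 1%:M.
  by rewrite -[M]trmxK -trmx_mul (mulmx1C hM) trmx1.
rewrite act_Tt Tt_eq; set y := Ordinal (iota_lex_lt_n a).
have -> : (a i0 == iota_lex t a :> nat)%:R = (1%:M : 'M[R]_(n i0)) (a i0) y by rewrite mxE.
rewrite -hM' mxE; apply: eq_bigr => z _; rewrite !mxE; congr (_ * _).
apply: eq_bigr => i i_i0; rewrite mxE.
by congr (h i _ _); apply: iota_lex_inj i_i0; rewrite iota_lex_diag.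
Qed.

Lemma in_m_conj (h Z : gltuple R n) : inH t h -> in_m t Z -> in_m t (glconj h Z).
Proof.
move=> h_H Z_m K K_h; rewrite gldot_conj.
by apply: Z_m; apply: in_h_conj (inH_trmx h_H) K_h.
Qed.

Lemma dact_Tt (Z : gltuple R n) a : dact Z T a =
  Z i0 (a i0) (Ordinal (iota_lex_lt_n a)) + \sum_(i < d | i != i0) act_slot (Z i) T a.
Proof.
rewrite dactE (bigD1 i0) //=; congr (_ + _).
have is_y (x : 'I_(n i0)) : (val x == iota_lex t a) = (x == Ordinal (iota_lex_lt_n a)).
  by rewrite -(inj_eq val_inj).
rewrite /act_slot; under eq_bigr do rewrite Tt_with_i0 is_y mulr_natr mulrb.
by rewrite -big_mkcond big_pred1_eq.
Qed.

Definition in_first_factor (Z : gltuple R n) : Prop := forall i, i != i0 -> Z i = 0.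

Lemma first_factor_h_eq0 (Z : gltuple R n) : in_first_factor Z -> in_h t Z -> Z = gl0 R n.
Proof.
move=> Z_1 Z_h; apply: functional_extensionality_dep => i.
case: (eqVneq i i0) => [->|i_i0]; last exact: Z_1.
apply/matrixP => x y; have := Z_h (midx_with (diag_midx y) x).
rewrite dact_Tt big1 => [|j j_i0]; last by rewrite Z_1 // act_slot0.
have -> : Ordinal (iota_lex_lt_n (midx_with (diag_midx y) x)) = y.
  by apply/val_inj; rewrite /= iota_lex_with_i0 iota_lex_diag.
by rewrite midx_with_in addr0 mxE.
Qed.

Lemma first_factor_dec (Z : gltuple R n) :
  exists X K, [/\ in_first_factor X, in_h t K & Z = gladd X K].
Proof.
pose rest b := \sum_(i < d | i != i0) act_slot (Z i) T b.
pose K := dfwith Z (\matrix_(x, y) - rest (midx_with (diag_midx y) x) : 'M[R]_(n i0)).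
exists (fun i => Z i - K i), K; split.
- by move=> i i_i0; rewrite /K dfwith_out 1?eq_sym // subrr.
- move=> a; rewrite dact_Tt /K dfwith_in mxE midx_with_diag.
  rewrite (eq_bigr (fun i => act_slot (Z i) T a)) ?addNr // => i i_i0.
  by rewrite dfwith_out // eq_sym.
- by apply: functional_extensionality_dep => i; rewrite /gladd subrK.
Qed.

Lemma reductive_of_eq : reductive R n t.
Proof.
exists in_first_factor; split.
- split; first by [].
    by move=> Z Z' Z_1 Z'_1 i i_i0; rewrite /gladd Z_1 // Z'_1 // addr0.
  by move=> c Z Z_1 i i_i0; rewrite /glscale Z_1 // scaler0.
- split; first exact: first_factor_h_eq0.
  by move=> Z; have [X [K [X_1 K_h ->]]] := first_factor_dec Z; exists X, K.
- by move=> h _ Z Z_1 i i_i0; rewrite /glconj Z_1 // mulmx0 mul0mx.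
Qed.

End EqualFactors.

End Stabilizer.

Theorem mainTheorem10 (R : realType) (d : nat) (n t : 'I_d -> nat) :
  (3 <= d)%N ->
  (forall i, (2 <= n i)%N) ->
  (forall i, (0 < t i)%N /\ (t i <= n i)%N) ->
  (forall i0 : 'I_d, val i0 = 0%N ->
     t i0 = (\prod_(j < d | (0 < val j)%N) t j)%N) ->
  (reductive R n t <-> (forall i, n i = t i)) /\
  ((forall i, n i = t i) ->
     forall h : gltuple R n, inH t h ->
     forall Z : gltuple R n, in_m t Z -> in_m t (glconj h Z)).
Proof.
move=> d_ge3 _ t_bounds t_i0.
have [i0 i0_0] : exists i0 : 'I_d, val i0 = 0%N by exists (Ordinal (ltnW (ltnW d_ge3))).
have t_gt0 i := (t_bounds i).1; have t_le_n i := (t_bounds i).2.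
have {}t_i0 := t_i0 i0 i0_0.
split; [split|].
- move=> red i; apply/eqP; rewrite eqn_leq t_le_n andbT leqNgt; apply/negP => t_lt_n.
  exact: not_reductive_of_lt i0_0 t_gt0 t_le_n t_i0 _ t_lt_n red.
- exact: reductive_of_eq i0_0 t_gt0 t_le_n t_i0.
- move=> n_eq_t h h_H Z; exact: in_m_conj i0_0 t_gt0 t_le_n t_i0 n_eq_t _ _ h_H.
Qed.
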